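(* Let $g_c$ be a density generator, $\mu\in\mathbb{R}$, $\sigma>0$, $\rho\in(-1,1)$, $\sigma_\rho=\sigma\sqrt{2(1-\rho)}$, and let $W\sim{\rm ULS}(\sigma_\rho,g_c)$ with PDF $f_W$. Suppose the random variable $Z_\rho$ (defined in the context) has a PDF $f_{Z_\rho}$ which is symmetric around $0$, i.e. $f_{Z_\rho}(-z)=f_{Z_\rho}(z)$ for all $z\in\mathbb{R}$. Then $f_W$ is symmetric around $w_0=1/2$, i.e. $f_W(\tfrac12-w)=f_W(\tfrac12+w)$ whenever $\tfrac12\pm w\in(0,1)$, and both the median and the mean of $W$ equal $1/2$.
   Context: A density generator is a function $g_c:[0,\infty)\to[0,\infty)$ with $0<\int_0^\infty g_c(u)\,{\rm d}u<\infty$; put $Z_{g_c}=\pi\int_0^\infty g_c(u)\,{\rm d}u$ and $\eta=\exp(\mu)$. A random variable $W$ with support $(0,1)$ follows ${\rm ULS}(\sigma_\rho,g_c)$ if its PDF is $$f_W(w)=\frac{1}{w(1-w)\sigma^2\sqrt{1-\rho^2}\,Z_{g_c}}\int_0^\infty \frac1t\, g_c\!\left(\frac{\tilde t_w^{\,2}-2\rho\tilde t_w\tilde t+\tilde t^{\,2}}{1-\rho^2}\right){\rm d}t,\quad 0<w<1,$$ where $t_w=\frac{w}{1-w}t$, $\tilde t_w=\frac1\sigma\log(t_w/\eta)$, $\tilde t=\frac1\sigma\log(t/\eta)$. Let $U_1,U_2,R,D$ be mutually independent with $\mathbb{P}(U_i=-1)=\mathbb{P}(U_i=1)=1/2$,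 $D$ having PDF $2/(\pi\sqrt{1-d^2})$ on $(0,1)$, and $R$ having PDF $2rg_c(r^2)/\int_0^\infty g_c(u)\,{\rm d}u$ on $(0,\infty)$. Set $Z_1=RDU_1$, $Z_2=R\sqrt{1-D^2}\,U_2$ and $Z_\rho=\frac{1}{\sqrt{2(1-\rho)}}[(1-\rho)Z_1-\sqrt{1-\rho^2}\,Z_2]$. *)

From HB Require Import structures.
From mathcomp Require Import all_boot all_order all_algebra.
From mathcomp Require Import all_classical all_reals all_analysis.
Set Implicit Arguments. Unset Strict Implicit. Unset Printing Implicit Defensive.
Import Order.TTheory GRing.Theory Num.Theory.
Import numFieldNormedType.Exports.
Local Open Scope classical_set_scope.
Local Open Scope ring_scope.

Section defs.
Variable R : realType.
Local Notation leb := (@lebesgue_measure R).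

Definition density_generator (g : R -> R) : Prop :=
  (forall u, 0 <= u -> 0 <= g u) /\
  measurable_fun `[(0:R), +oo[ g /\
  leb.-integrable `[(0:R), +oo[ (EFin \o g) /\
  0 < \int[leb]_(u in `[(0:R), +oo[) g u.

Definition Zg (g : R -> R) : R := pi * \int[leb]_(u in `[(0:R), +oo[) g u.

(* PDF of ULS(sigma_rho, g_c) (formula of the context, meaningful for 0<w<1) *)
Definition ULS_pdf (g : R -> R) (mu sigma rho : R) (w : R) : R :=
  let eta := expR mu in
  (w * (1 - w) * sigma ^+ 2 * Num.sqrt (1 - rho ^+ 2) * Zg g)^-1 *
  \int[leb]_(t in `](0:R), +oo[)
     (let tw := w / (1 - w) * t in
      let ttw := ln (tw / eta) / sigma in
      let tt := ln (t / eta) / sigma in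
      t^-1 * g ((ttw ^+ 2 - 2 * rho * ttw * tt + tt ^+ 2) / (1 - rho ^+ 2))).

Definition R_pdf (g : R -> R) (r : R) : R :=
  2 * r * g (r ^+ 2) / \int[leb]_(u in `[(0:R), +oo[) g u.

Definition D_pdf (x : R) : R := 2 / (pi * Num.sqrt (1 - x ^+ 2)).

Definition has_pdf d (T : measurableType d) (P : probability T R)
  (X : T -> R) (S : set R) (f : R -> R) : Prop :=
  forall A : set R, measurable A ->
    P (X @^-1` A) = (\int[leb]_(x in A `&` S) (f x)%:E)%E.

Definition mutually_independent4 d (T : measurableType d) (P : probability T R)
  (X1 X2 X3 X4 : T -> R) : Prop :=
  forall A1 A2 A3 A4 : set R,
    measurable A1 -> measurable A2 -> measurable A3 -> measurable A4 ->
    P (X1 @^-1` A1 `&` X2 @^-1` A2 `&` X3 @^-1` A3 `&` X4 @^-1` A4) =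
    (P (X1 @^-1` A1) * P (X2 @^-1` A2) * P (X3 @^-1` A3) * P (X4 @^-1` A4))%E.

Definition rademacher d (T : measurableType d) (P : probability T R)
  (U : T -> R) : Prop :=
  P (U @^-1` [set -1]) = (1/2)%:E /\ P (U @^-1` [set 1]) = (1/2)%:E.

Definition Z_rho T (rho : R) (U1 U2 Rv D : T -> R) : T -> R :=
  fun x =>
    let Z1 := Rv x * D x * U1 x in
    let Z2 := Rv x * Num.sqrt (1 - D x ^+ 2) * U2 x in
    ((1 - rho) * Z1 - Num.sqrt (1 - rho ^+ 2) * Z2) / Num.sqrt (2 * (1 - rho)).

End defs.

From HB Require Import structures.
From mathcomp Require Import all_boot all_order all_algebra.
From mathcomp Require Import all_classical all_reals all_analysis.
From mathcomp Require Import measurable_realfun ring lra.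
Import Order.TTheory GRing.Theory Num.Theory.
Import numFieldNormedType.Exports.
Local Open Scope classical_set_scope.
Local Open Scope ring_scope.

(** The quadratic form in the ULS density is symmetric in its two arguments,
    so the substitution [t = w / (1 - w) * u] in the defining integral turns
    [f_W (1 - w)] into [f_W w].  Hence
    [W] and [1 - W] have the same law: [P (W <= 1/2) = P (W >= 1/2)], and the
    two events cover the sample space, so both probabilities are at least
    [1/2]; and since [W] lies in [(0, 1)] almost surely, [E W = E (1 - W)],
    i.e. [E W = 1/2]. *)

Section affine_change_of_variables.
Context {R : realType}.
Local Notation leb := (@lebesgue_measure R).

Definition affine (a b u : R) : R := a + b * u.

Lemma measurable_affine a b : measurable_fun [set: measurableTypeR R]
  (affine a b : measurableTypeR R -> measurableTypeR R).
Proof. by apply: measurable_funD => //; exact: mulrl_measurable. Qed.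

(* The library's pushforward is a measure only given the measurability proof,
   hence the explicit instance. *)
Let leb_affine a b :=
  measure_function_pushforward__canonical__measure_function_Measure leb
    (measurable_affine a b).

Lemma lebesgue_measure_affine_preimage_ocitv a b x y : b != 0 ->
  leb (affine a b @^-1` `]x, y]) = ((`|b|^-1)%:E * leb `]x, y])%E.
Proof.
move=> b0; rewrite !lebesgue_measure_itv /= !lte_fin.
have [bp|bn] := ltrP 0 b.
  have -> : affine a b @^-1` `]x, y] = `](x - a) / b, (y - a) / b]%classic.
    by apply/seteqP; split => u /=;
      rewrite /affine !in_itv /= ler_pdivlMr // ltr_pdivrMr // => /andP[? ?];
      apply/andP; split; lra.
  rewrite lebesgue_measure_itv /= lte_fin ltr_pM2r ?invr_gt0 // ltrBlDr subrK.
  case: ifP => _; last by rewrite mule0.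
  by rewrite -EFinM gtr0_norm //; congr (_%:E); field; rewrite lt0r_neq0.
have {b0}bn : b < 0 by rewrite lt_neqAle b0 bn.
have -> : affine a b @^-1` `]x, y] = `[(y - a) / b, (x - a) / b[%classic.
  by apply/seteqP; split => u /=;
    rewrite /affine !in_itv /= ler_ndivrMr // ltr_ndivlMr // => /andP[? ?];
    apply/andP; split; nra.
rewrite lebesgue_measure_itv /= lte_fin ltr_nM2r ?invr_lt0 // ltrBlDr subrK.
case: ifP => _; last by rewrite mule0.
by rewrite -EFinM ltr0_norm //; congr (_%:E); field; rewrite ltr0_neq0.
Qed.

Lemma lebesgue_measure_affine_preimage a b A : b != 0 -> measurable A ->
  leb (affine a b @^-1` A) = ((`|b|^-1)%:E * leb A)%E.
Proof.
move=> b0 mA; have b_ge0 : 0 <= `|b| by [].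
have := @lebesgue_measure_unique R (mscale (NngNum b_ge0) (leb_affine a b)).
move=> /(_ _ A mA) ->.
  by rewrite /mscale /= muleA -EFinM mulVf ?mul1e ?normr_eq0.
move=> _ [[x y] _ <-].
change (leb `]x, y] = `|b|%:E * leb (affine a b @^-1` `]x, y]))%E.
rewrite lebesgue_measure_affine_preimage_ocitv //.
by rewrite muleA -EFinM mulfV ?mul1e ?normr_eq0.
Qed.

Lemma ge0_integral_affine a b D (F : R -> \bar R) : b != 0 -> measurable D ->
  measurable_fun D F -> (forall x, D x -> (0 <= F x)%E) ->
  (\int[leb]_(x in D) F x =
   `|b|%:E * \int[leb]_(u in affine a b @^-1` D) F (affine a b u))%E.
Proof.
move=> b0 mD mF F0.
rewrite -(ge0_integral_pushforward (measurable_affine a b)) //; last first.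
  by move=> y /set_mem; exact: F0.
have invb_ge0 : 0 <= `|b|^-1 by rewrite invr_ge0.
rewrite [in RHS](eq_measure_integral (mscale (NngNum invb_ge0) leb)).
- rewrite (@ge0_integral_mscale _ (measurableTypeR R) _ _ _ mD _ _ mF) //=.
  by rewrite muleA -EFinM mulfV ?mul1e ?normr_eq0.
- exact: measurable_affine.
- move=> maff A mA _.
  change (leb (affine a b @^-1` A) = ((`|b|^-1)%:E * leb A)%E).
  exact: lebesgue_measure_affine_preimage.
Qed.

End affine_change_of_variables.

Section clamp01.
Context {R : realType}.

Definition clamp01 (x : R) : R := Num.max 0 (Num.min 1 x).

Lemma clamp01_ge0 x : 0 <= clamp01 x.
Proof. by rewrite /clamp01 le_max lexx. Qed.

Lemma clamp01_le1 x : clamp01 x <= 1.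
Proof. by rewrite /clamp01 ge_max ler01 ge_min lexx. Qed.

Lemma clamp01_id x : 0 <= x <= 1 -> clamp01 x = x.
Proof. by case/andP => x0 x1; rewrite /clamp01 (min_idPr x1) (max_idPr x0). Qed.

Lemma clamp01_reflect x : clamp01 (1 - x) = 1 - clamp01 x.
Proof.
rewrite /clamp01 !minEle; repeat (case: ifPn; rewrite -?ltNge => ?).
all: rewrite !maxEle; repeat (case: ifPn; rewrite -?ltNge => ?); lra.
Qed.

Lemma measurable_clamp01 : measurable_fun setT clamp01.
Proof. by apply: measurable_maxr => //; exact: measurable_minr. Qed.

End clamp01.

Section reflection_invariant_law.
Context d (T : measurableType d) {R : realType} (P : probability T R).
Variable W : T -> R.
Hypothesis mW : measurable_fun setT W.
Hypothesis W_reflect : forall A : set R, measurable A ->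
  P (W @^-1` A) = P ((fun t => 1 - W t) @^-1` A).

Let measurable_preimage_W A : measurable A -> measurable (W @^-1` A).
Proof. by move=> mA; rewrite -[X in measurable X]setTI; exact: mW. Qed.

Lemma reflection_invariant_median :
  ((1/2)%:E <= P (W @^-1` `]-oo, (1/2)%R]) /\
   (1/2)%:E <= P (W @^-1` `[(1/2)%R, +oo[))%E.
Proof.
have mlow := measurable_preimage_W _ (measurable_itv `]-oo, 1/2]).
have mupp := measurable_preimage_W _ (measurable_itv `[1/2, +oo[).
have low_upp : P (W @^-1` `]-oo, 1/2]) = P (W @^-1` `[1/2, +oo[).
  rewrite W_reflect //; congr (P _); apply/seteqP; split => t /=;
    rewrite !in_itv /= !andbT; lra.
have cover : W @^-1` `]-oo, 1/2] `|` W @^-1` `[1/2, +oo[ = setT.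
  apply/seteqP; split => // t _ /=; rewrite !in_itv /= !andbT.
  by case: (lerP (W t) (1/2)) => h; [left | right; rewrite ltW].
have : (1 <= P (W @^-1` `[(1/2)%R, +oo[) + P (W @^-1` `[(1/2)%R, +oo[))%E.
  by rewrite -{1}low_upp -(probability_setT P) -cover measureU2.
rewrite low_upp -(fineK (fin_num_measure P _ mupp)) -EFinD !lee_fin => ?.
by split; lra.
Qed.

Lemma ge0_integral_reflection_invariant (f : R -> \bar R) :
  measurable_fun setT f -> (forall x, (0 <= f x)%E) ->
  (\int[P]_t f (W t) = \int[P]_t f (1 - W t)%R)%E.
Proof.
move=> mf f0.
have integral_law X (mX : measurable_fun setT X) :
    (\int[P]_t f (X t) = \int[pushforward P X]_(y in setT) f y)%E.
  by rewrite ge0_integral_pushforward.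
have mW' : measurable_fun setT (fun t => 1 - W t) by exact: measurable_funB.
rewrite (integral_law _ mW) (integral_law _ mW').
by apply: eq_measure_integral => A mA _; exact: W_reflect.
Qed.

(* Clamping [W] to [[0, 1]] keeps every integrand below bounded and
   nonnegative, so no integrability of [W] is needed. *)
Lemma expectation_clamp01 : P (W @^-1` `[0, 1]) = 1%E ->
  ('E_P[W] = \int[P]_t (clamp01 (W t))%:E)%E.
Proof.
move=> W01; rewrite unlock; apply: ae_eq_integral => //.
- exact/measurable_EFinP.
- exact/measurable_EFinP/(measurableT_comp measurable_clamp01).
exists (~` (W @^-1` `[0, 1])); split.
- exact/measurableC/measurable_preimage_W.
- have := probability_setC P (measurable_preimage_W _ (measurable_itv `[0, 1])).
  by rewrite W01 subee.
- move=> t /= + W01t; apply=> _.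
  by move: W01t; rewrite in_itv /= => /clamp01_id ->.
Qed.

Lemma integral_clamp01_twice :
  (\int[P]_t (clamp01 (W t))%:E + \int[P]_t (clamp01 (W t))%:E = 1)%E.
Proof.
rewrite [X in (_ + X)%E](ge0_integral_reflection_invariant (EFin \o clamp01)) /=.
- under [X in (_ + X)%E]eq_integral do rewrite clamp01_reflect.
  rewrite -ge0_integralD //; last 4 first.
  + by move=> t _; rewrite lee_fin clamp01_ge0.
  + exact/measurable_EFinP/(measurableT_comp measurable_clamp01).
  + by move=> t _; rewrite lee_fin subr_ge0 clamp01_le1.
  + apply/measurable_EFinP; apply: measurable_funB => //.
    exact: measurableT_comp measurable_clamp01 mW.
  under eq_integral do rewrite -EFinD addrC subrK.
  by rewrite integral_cst // mul1e; exact: probability_setT.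
- by apply/measurable_EFinP; exact: measurable_clamp01.
- by move=> x; rewrite lee_fin clamp01_ge0.
Qed.

Lemma reflection_invariant_expectation :
  P (W @^-1` `[0, 1]) = 1%E -> ('E_P[W] = (1/2)%:E)%E.
Proof.
move=> W01; rewrite expectation_clamp01 //.
have := integral_clamp01_twice.
set I := (\int[P]_t (clamp01 (W t))%:E)%E => twoI.
have I_ge0 : (0 <= I)%E by apply: integral_ge0 => t _; rewrite lee_fin clamp01_ge0.
have Ifin : I \is a fin_num.
  by rewrite ge0_fin_numE // (@le_lt_trans _ _ 1%E) ?ltry // -twoI leeDl.
move: twoI; rewrite -(fineK Ifin) -EFinD => -[?].
by congr (_%:E); lra.
Qed.

End reflection_invariant_law.

Section density_on_unit_interval.
Context d (T : measurableType d) {R : realType} (P : probability T R).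

Lemma has_pdf_support_subset (X : T -> R) S f B :
  measurable B -> S `<=` B -> has_pdf P X S f -> P (X @^-1` B) = 1%E.
Proof.
move=> mB SB hX; rewrite hX // (setIidr SB).
by rewrite -(probability_setT P) -(preimage_setT X) hX // setTI.
Qed.

Lemma has_pdf_reflection_invariant (W : T -> R) (f : R -> R) :
  measurable_fun (`]0, 1[ : set R) f -> (forall x, 0 < x < 1 -> 0 <= f x) ->
  (forall x, 0 < x < 1 -> f (1 - x) = f x) -> has_pdf P W `]0, 1[ f ->
  forall A, measurable A -> P (W @^-1` A) = P ((fun t => 1 - W t) @^-1` A).
Proof.
move=> mf f_ge0 f_reflect hW A mA.
have reflect_preimage B :
    (fun t => 1 - W t) @^-1` B = W @^-1` (affine 1 (-1) @^-1` B).
  by apply/seteqP; split => t; rewrite /affine /= mulN1r.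
have mA' : measurable (affine 1 (-1) @^-1` A).
  by rewrite -[X in measurable X]setTI; exact: measurable_affine.
have mA01 : measurable (A `&` `]0, 1[) by exact: measurableI.
rewrite reflect_preimage !hW // (ge0_integral_affine 1 (-1)) //.
- rewrite normrN1 mul1e preimage_setI.
  have -> : affine 1 (-1) @^-1` `]0, 1[ = `]0, 1[%classic :> set R.
    by apply/seteqP; split => u /=; rewrite /affine !in_itv /=; lra.
  apply: eq_integral => u /set_mem [_ /=]; rewrite in_itv /= => u01.
  by rewrite /affine mulN1r f_reflect.
- apply/measurable_EFinP.
  exact: measurable_funS (measurable_itv _) (@subIsetr _ _ _) mf.
- by move=> x [_ /=]; rewrite in_itv /= lee_fin => /f_ge0.
Qed.

End density_on_unit_interval.

Section ULS_density.
Context {R : realType}.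
Local Notation leb := (@lebesgue_measure R).
Variables (g : R -> R) (mu sigma rho : R).
Hypothesis g_density : density_generator g.
Hypothesis sigma_gt0 : 0 < sigma.
Hypothesis rho_bounds : -1 < rho < 1.

Definition ULS_quad (x y : R) : R :=
  (x ^+ 2 - 2 * rho * x * y + y ^+ 2) / (1 - rho ^+ 2).

Definition ULS_log (t : R) : R := ln (t / expR mu) / sigma.

Definition ULS_integrand (w t : R) : R :=
  t^-1 * g (ULS_quad (ULS_log (w / (1 - w) * t)) (ULS_log t)).

Definition ULS_normalizer (w : R) : R :=
  w * (1 - w) * sigma ^+ 2 * Num.sqrt (1 - rho ^+ 2) * Zg g.

Lemma ULS_pdfE w : ULS_pdf g mu sigma rho w =
  (ULS_normalizer w)^-1 * \int[leb]_(t in `]0, +oo[) ULS_integrand w t.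
Proof. by []. Qed.

Lemma ULS_quadC x y : ULS_quad x y = ULS_quad y x.
Proof. by rewrite /ULS_quad; congr (_ / _); ring. Qed.

Lemma ULS_quad_ge0 x y : 0 <= ULS_quad x y.
Proof.
case/andP: rho_bounds => rho_gtN1 rho_lt1.
have -> : ULS_quad x y =
    ((x - rho * y) ^+ 2 + (1 - rho ^+ 2) * y ^+ 2) / (1 - rho ^+ 2).
  by rewrite /ULS_quad; congr (_ / _); ring.
have den_ge0 : 0 <= 1 - rho ^+ 2 by nra.
apply: divr_ge0 => //; apply: addr_ge0; first exact: sqr_ge0.
by apply: mulr_ge0 => //; exact: sqr_ge0.
Qed.

Lemma density_generator_ge0 u : 0 <= u -> 0 <= g u.
Proof. by case: g_density => + _; apply. Qed.

Lemma ULS_integrand_ge0 w t : 0 < t -> 0 <= ULS_integrand w t.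
Proof.
move=> t_gt0; rewrite mulr_ge0 ?invr_ge0 ?(ltW t_gt0) //.
by rewrite density_generator_ge0 ?ULS_quad_ge0.
Qed.

Lemma ULS_normalizer_gt0 w : 0 < w < 1 -> 0 < ULS_normalizer w.
Proof.
case/andP => w_gt0 w_lt1; case/andP: rho_bounds => rho_gtN1 rho_lt1.
have Zg_gt0 : 0 < Zg g by rewrite mulr_gt0 ?pi_gt0 //; case: g_density => _ [_ []].
rewrite /ULS_normalizer mulr_gt0 // mulr_gt0 //; last by rewrite sqrtr_gt0; nra.
by rewrite !mulr_gt0 ?subr_gt0 ?exprn_gt0.
Qed.

Lemma ULS_pdf_ge0 w : 0 < w < 1 -> 0 <= ULS_pdf g mu sigma rho w.
Proof.
move=> w01; rewrite ULS_pdfE mulr_ge0 //.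
  by rewrite invr_ge0 ltW ?ULS_normalizer_gt0.
by apply: Rintegral_ge0 => t /=; rewrite in_itv /= andbT; exact: ULS_integrand_ge0.
Qed.

(* [ULS_integrand w t] for [0 < w < 1] and [0 < t], written with logarithms
   and an indicator so that it is visibly measurable in the pair [(w, t)]. *)
Definition ULS_integrand_log (p : R * R) : R :=
  \1_`]0, +oo[ p.2 * (expR (- ln p.2) *
    g (ULS_quad ((ln p.1 - ln (1 - p.1) + ln p.2 - mu) / sigma)
                ((ln p.2 - mu) / sigma))).

Lemma ULS_integrand_log_ge0 p : 0 <= ULS_integrand_log p.
Proof.
rewrite /ULS_integrand_log mulr_ge0 ?indicE ?ler0n //.
by rewrite mulr_ge0 ?expR_ge0 ?density_generator_ge0 ?ULS_quad_ge0.
Qed.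

Lemma ULS_integrand_logE w t : 0 < w < 1 -> 0 < t ->
  ULS_integrand_log (w, t) = ULS_integrand w t.
Proof.
case/andP => w_gt0 w_lt1 t_gt0; have w1_gt0 : 0 < 1 - w by rewrite subr_gt0.
rewrite /ULS_integrand_log /ULS_integrand /ULS_log /= indicE mem_set; last first.
  by rewrite /= in_itv /= andbT.
rewrite mul1r expRN lnK ?posrE //; congr (_ * g (ULS_quad (_ / _) (_ / _))).
  have wt_gt0 : 0 < w / (1 - w) * t by rewrite mulr_gt0 ?divr_gt0.
  rewrite ln_div ?posrE ?expR_gt0 // expRK.
  by rewrite lnM ?posrE ?divr_gt0 // ln_div ?posrE.
by rewrite ln_div ?posrE ?expR_gt0 // expRK.
Qed.

Lemma measurable_ULS_integrand_log : measurable_fun setT ULS_integrand_log.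
Proof.
have mln1 : measurable_fun setT (fun p : R * R => ln p.1).
  exact: measurableT_comp (@measurable_ln R) measurable_fst.
have mln2 : measurable_fun setT (fun p : R * R => ln p.2).
  exact: measurableT_comp (@measurable_ln R) measurable_snd.
have mlnB1 : measurable_fun setT (fun p : R * R => ln (1 - p.1)).
  exact: measurableT_comp (@measurable_ln R) (measurable_funB _ _).
apply: measurable_funM.
  have mi : measurable_fun setT (\1_`]0%R, +oo[ : R -> R) by exact: measurable_indic.
  exact: measurableT_comp mi measurable_snd.
apply: measurable_funM.
  exact: measurableT_comp (@measurable_expR R) (measurable_funN mln2).
have mg : measurable_fun (`[0%R, +oo[ : set R) g by case: g_density => _ [].
apply: (measurable_comp (F := `[0%R, +oo[ : set R)) => //.
  by move=> _ [p _ <-]; rewrite /= in_itv /= andbT ULS_quad_ge0.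
rewrite /ULS_quad; apply: measurable_funM => //.
by apply: measurable_funD; [apply: measurable_funB|]; rewrite ?measurable_funX //;
  do ?[apply: measurable_funM | apply: measurable_funB | apply: measurable_funD].
Qed.

Lemma measurable_ULS_integrand w : 0 < w < 1 ->
  measurable_fun (`]0, +oo[ : set R) (ULS_integrand w).
Proof.
move=> w01; have := measurable_fun_pair2 w measurable_ULS_integrand_log.
move=> /(measurable_funS measurableT (@subsetT _ (`]0, +oo[ : set R))).
apply: eq_measurable_fun => t /set_mem /=; rewrite in_itv /= andbT.
exact: ULS_integrand_logE.
Qed.

(* The substitution [t = w / (1 - w) * u] exchanges the two arguments of the
   symmetric quadratic form. *)
Lemma ULS_integrand_reflect w u : 0 < w < 1 -> 0 < u ->
  ULS_integrand (1 - w) (w / (1 - w) * u) =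
  (w / (1 - w))^-1 * ULS_integrand w u.
Proof.
case/andP => w_gt0 w_lt1 u_gt0.
have w1_gt0 : 0 < 1 - w by rewrite subr_gt0.
rewrite /ULS_integrand; have -> : (1 - w) / (1 - (1 - w)) * (w / (1 - w) * u) = u.
  by field; rewrite subKr !lt0r_neq0.
by rewrite ULS_quadC invfM mulrA.
Qed.

Lemma integral_ULS_integrand_reflect w : 0 < w < 1 ->
  (\int[leb]_(t in `]0%R, +oo[) (ULS_integrand (1 - w) t)%:E =
   \int[leb]_(t in `]0%R, +oo[) (ULS_integrand w t)%:E)%E.
Proof.
move=> w01; have /andP[w_gt0 w_lt1] := w01; have w1_01 : 0 < 1 - w < 1.
  by rewrite subr_gt0 w_lt1 ltrBlDr ltrDl.
set k := w / (1 - w); have k_gt0 : 0 < k by rewrite divr_gt0 ?subr_gt0.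
rewrite (ge0_integral_affine 0 k) ?lt0r_neq0 //; last 2 first.
- by apply/measurable_EFinP; exact: measurable_ULS_integrand.
- by move=> t; rewrite /= in_itv /= andbT lee_fin => /ULS_integrand_ge0.
have -> : affine 0 k @^-1` `]0, +oo[ = `]0, +oo[%classic :> set R.
  apply/seteqP; split => u /=;
  by rewrite /affine add0r !in_itv /= !andbT pmulr_rgt0.
under eq_integral => u /[!inE] /=.
  rewrite in_itv /= andbT => u_gt0.
  rewrite /affine add0r ULS_integrand_reflect ?w_gt0 // EFinM.
  over.
rewrite ge0_integralZl ?lee_fin ?invr_ge0 ?(ltW k_gt0) //; last 2 first.
- by apply/measurable_EFinP; exact: measurable_ULS_integrand.
- by move=> t; rewrite /= in_itv /= andbT lee_fin => /ULS_integrand_ge0.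
by rewrite muleA -EFinM gtr0_norm // mulfV ?mul1e // lt0r_neq0.
Qed.

Lemma integral_ULS_integrand_fubiniE w : 0 < w < 1 ->
  (\int[leb]_(t in `]0%R, +oo[) (ULS_integrand w t)%:E =
   fubini_F leb (EFin \o ULS_integrand_log) w)%E.
Proof.
move=> w01; rewrite integral_mkcond /fubini_F; apply: eq_integral => t _.
rewrite patchE /=; case: ifPn => [|t_out].
  by rewrite inE /= in_itv /= andbT => t_gt0; rewrite ULS_integrand_logE.
by rewrite /ULS_integrand_log indicE (negbTE t_out) mul0r.
Qed.

(* The library has no measurability lemma for [x^-1]; for [0 < x] it equals
   [expR (- ln x)]. *)
Lemma measurable_ULS_pdf :
  measurable_fun (`]0, 1[ : set R) (ULS_pdf g mu sigma rho).
Proof.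
have mI : measurable_fun setT
    (fun w => fine (fubini_F leb (EFin \o ULS_integrand_log) w)).
  apply: measurableT_comp (fine_measurable measurableT) _.
  apply: measurable_fun_fubini_tonelli_F.
    by apply/measurable_EFinP; exact: measurable_ULS_integrand_log.
  by move=> p; rewrite lee_fin ULS_integrand_log_ge0.
have mN : measurable_fun setT (fun w => expR (- ln (ULS_normalizer w))).
  apply: measurableT_comp (@measurable_expR R) (measurable_funN _).
  apply: measurableT_comp (@measurable_ln R) _.
  rewrite /ULS_normalizer; do 4 apply: measurable_funM => //.
  exact: measurable_funB.
move: (measurable_funM mN mI).
move=> /(measurable_funS measurableT (@subsetT _ (`]0, 1[ : set R))).
apply: eq_measurable_fun => w /set_mem /= w01.
rewrite ULS_pdfE expRN lnK ?posrE ?ULS_normalizer_gt0 //.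
by rewrite /Rintegral integral_ULS_integrand_fubiniE.
Qed.

Lemma ULS_pdf_reflect w : 0 < w < 1 ->
  ULS_pdf g mu sigma rho (1 - w) = ULS_pdf g mu sigma rho w.
Proof.
move=> w01; rewrite !ULS_pdfE /Rintegral integral_ULS_integrand_reflect //.
by congr (_^-1 * _); rewrite /ULS_normalizer; ring.
Qed.

End ULS_density.

Theorem proposition3 (R : realType) (g : R -> R) (mu sigma rho : R)
  (hg : density_generator g) (hsigma : 0 < sigma) (hrho : -1 < rho < 1)
  (* W ~ ULS(sigma_rho, g_c), sigma_rho = sigma * sqrt(2(1-rho)) *)
  (d1 : measure_display) (T1 : measurableType d1) (P1 : probability T1 R)
  (W : T1 -> R) (mW : measurable_fun setT W)
  (hW : has_pdf P1 W `](0:R), 1%R[ (ULS_pdf g mu sigma rho))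
  (* the construction of Z_rho *)
  (d2 : measure_display) (T2 : measurableType d2) (P2 : probability T2 R)
  (U1 U2 Rv D : T2 -> R)
  (mU1 : measurable_fun setT U1) (mU2 : measurable_fun setT U2)
  (mRv : measurable_fun setT Rv) (mD : measurable_fun setT D)
  (hind : mutually_independent4 P2 U1 U2 Rv D)
  (hU1 : rademacher P2 U1) (hU2 : rademacher P2 U2)
  (hD : has_pdf P2 D `](0:R), 1%R[ (@D_pdf R))
  (hRv : has_pdf P2 Rv `](0:R), +oo[ (R_pdf g))
  (* Z_rho has a PDF fZ which is symmetric around 0 *)
  (fZ : R -> R) (hZ : has_pdf P2 (Z_rho rho U1 U2 Rv D) setT fZ)
  (hsym : forall z, fZ (- z) = fZ z) :
  (forall w, 0 < 1/2 - w < 1 -> 0 < 1/2 + w < 1 ->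
     ULS_pdf g mu sigma rho (1/2 - w) = ULS_pdf g mu sigma rho (1/2 + w)) /\
  ((1/2)%:E <= P1 (W @^-1` `]-oo, (1/2)%R]) /\
   (1/2)%:E <= P1 (W @^-1` `[(1/2)%R, +oo[))%E /\
  ('E_P1[W] = (1/2)%:E)%E.
Proof.
have W_reflect : forall A, measurable A ->
    P1 (W @^-1` A) = P1 ((fun t => 1 - W t) @^-1` A).
  apply: has_pdf_reflection_invariant hW.
  - exact: measurable_ULS_pdf.
  - exact: ULS_pdf_ge0.
  - exact: ULS_pdf_reflect.
split.
  move=> w _ w_01; have -> : 1/2 - w = 1 - (1/2 + w) by lra.
  exact: ULS_pdf_reflect.
split; first exact: reflection_invariant_median.
apply: reflection_invariant_expectation => //.
apply: has_pdf_support_subset hW; first exact: measurable_itv.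
by move=> x /=; rewrite !in_itv /= => /andP[? ?]; rewrite !ltW.
Qed.
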